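(* Let $t\geq 2$ be an integer, $m=4t+2$, $n=2^m+1$, $\delta_1=\frac{n}{5}$ and $\delta_2=2^{4t-1}+\frac{2^{4t}-1}{5}$. If $x$ is an odd integer with $\delta_2<x\leq n-1$ and $x\neq\delta_1$, then $x$ is not a coset leader modulo $n$.
   Context: For $n=2^m+1$ and an integer $x$, the 2-cyclotomic coset of $x$ modulo $n$ is $C_x=\{x\cdot 2^{j} \bmod n : j\geq 0\}\subseteq\{0,1,\dots,n-1\}$. For $0\leq x\leq n-1$, ''$x$ is a coset leader'' means that $x$ is the smallest element of $C_x$. *)

From mathcomp Require Import all_boot.

Definition in_coset (n x y : nat) : Prop := exists j : nat, y = (x * 2 ^ j) %% n.

Definition coset_leader (n x : nat) : Prop :=
  x < n /\ in_coset n x x /\ forall y, in_coset n x y -> x <= y.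

From mathcomp Require Import all_boot zify.

(* Since 2^m = -1 (mod n), the coset of x is closed under negation, so a coset
   leader x is at most the distance [fold n (x * 2^k)] from x * 2^k to the
   nearest multiple of n.  Doubling acts on these distances by
   z |-> fold n (2 z).  If 7n/40 < x < n/5, this map sends the window
   (7n/40, n/5) to itself in four steps (through (7n/20, 2n/5), (n/5, 3n/10)
   and (2n/5, n/2)), every orbit value staying above x; so the value at
   k = m = 2 (mod 4) exceeds n/5, whereas x * 2^m = -x gives back x < n/5.
   The remaining x > n/5 are excluded by folding x, 2x and 4x. *)

Definition fold (n a : nat) : nat := minn (a %% n) (n - a %% n).

Lemma fold_le_half n a : 2 * fold n a <= n.
Proof. rewrite /fold; lia. Qed.

Lemma fold_small n z : 2 * z <= n -> fold n z = z.
Proof.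
move=> le2z; rewrite /fold.
have [n0|n_gt0] := posnP n; first by rewrite n0 modn0; lia.
rewrite modn_small; lia.
Qed.

Lemma mul_pred_modn n a : a * n.-1 %% n = (n - a %% n) %% n.
Proof.
have [->|n_gt0] := posnP n; first by rewrite muln0.
rewrite -modnMml; have lt_r_n := ltn_pmod a n_gt0; set r := a %% n in lt_r_n *.
have [r0|r_gt0] := posnP r; first by rewrite r0 mul0n mod0n subn0 modnn.
have -> : r * n.-1 = r.-1 * n + (n - r) by nia.
by rewrite modnMDl.
Qed.

Lemma fold_mul_pred n a : fold n (a * n.-1) = fold n a.
Proof.
rewrite /fold mul_pred_modn.
have [->|n_gt0] := posnP n; first by rewrite !modn0; lia.
have lt_r_n := ltn_pmod a n_gt0; set r := a %% n in lt_r_n *.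
have [r0|r_gt0] := posnP r; first by rewrite r0 subn0 modnn; lia.
rewrite modn_small; lia.
Qed.

Lemma fold_double n a : fold n (2 * a) = fold n (2 * fold n a).
Proof.
have [->|n_gt0] := posnP n; first by rewrite /fold !modn0; lia.
have -> : fold n (2 * a) = fold n (2 * (a %% n)) by rewrite /fold -modnMmr.
rewrite [fold n a]/fold; have lt_r_n := ltn_pmod a n_gt0.
set r := a %% n in lt_r_n *.
case: (leqP r (n - r)) => // gt_r; rewrite -fold_mul_pred.
have -> : 2 * r * n.-1 = (2 * r - 2) * n + 2 * (n - r) by nia.
by rewrite /fold modnMDl.
Qed.

Lemma fold_double_ge n z : n <= 4 * z -> 2 * z <= n -> fold n (2 * z) = n - 2 * z.
Proof.
move=> le_n_4z le_2z_n; rewrite /fold.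
have [eq_2z_n|lt_2z_n] := eqVneq (2 * z) n; first by rewrite eq_2z_n modnn; lia.
rewrite modn_small; lia.
Qed.

Lemma fold_orbit n x k :
  fold n (x * 2 ^ k) = iter k (fun z => fold n (2 * z)) (fold n x).
Proof.
elim: k => [|k IHk]; first by rewrite muln1.
by rewrite iterS -IHk expnSr mulnA mulnC fold_double.
Qed.

Lemma leader_le_fold m x k :
  coset_leader (2 ^ m + 1) x -> x <= fold (2 ^ m + 1) (x * 2 ^ k).
Proof.
set n := 2 ^ m + 1 => -[_ [_ minx]].
have in_r : in_coset n x (x * 2 ^ k %% n) by exists k.
have in_opp_r : in_coset n x ((n - x * 2 ^ k %% n) %% n).
  exists (k + m); rewrite -mul_pred_modn expnD mulnA.
  by rewrite /n addn1 /=.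
have := minx _ in_r; have := minx _ in_opp_r; rewrite /fold.
have n_gt0 : 0 < n by rewrite /n addn1.
have lt_r_n := ltn_pmod (x * 2 ^ k) n_gt0; set r := _ %% n in lt_r_n *.
have [->|r_gt0] := posnP r; first by lia.
rewrite modn_small; lia.
Qed.

Section FoldDoubling.

Variable n : nat.
Let h (z : nat) : nat := fold n (2 * z).

Lemma fold_double_twice z : n <= 8 * z -> 4 * z <= n -> h (h z) = n - 4 * z.
Proof.
move=> lo hi; rewrite /h (@fold_small n (2 * z)); last by lia.
rewrite fold_double_ge; lia.
Qed.

Lemma window_four_steps z :
  7 * n < 40 * z -> 5 * z < n -> 5 * iter 4 h z < n.
Proof.
move=> lo hi; rewrite -[iter 4 h z]/(h (h (h (h z)))).
rewrite (fold_double_twice z ltac:(lia) ltac:(lia)).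
have le_half := fold_le_half n (2 * (n - 4 * z)).
have gt_2n5 : 2 * n < 5 * h (n - 4 * z).
  rewrite /h; case: (ltnP (4 * (n - 4 * z)) n) => [lt|ge].
    rewrite fold_small; lia.
  rewrite fold_double_ge; lia.
rewrite {1}/h fold_double_ge; move: le_half gt_2n5; rewrite /h; lia.
Qed.

End FoldDoubling.

Lemma leader_lt_fifth m x :
  0 < m -> ~~ (3 %| 2 ^ m + 1) -> 5 * x != 2 ^ m + 1 ->
  coset_leader (2 ^ m + 1) x -> 5 * x < 2 ^ m + 1.
Proof.
set n := 2 ^ m + 1 => m_gt0 not3 not5 lead.
have n_eq : n = 2 * 2 ^ m.-1 + 1 by rewrite /n -expnS prednK.
have le_fold k : x <= fold n (x * 2 ^ k) := leader_le_fold _ _ k lead.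
have [lt_x_n _] := lead.
have lt_2x_n : 2 * x < n.
  by have := le_fold 0; rewrite muln1 /fold modn_small //; lia.
have := le_fold 2; have := le_fold 1; rewrite !fold_orbit fold_small /=; last by lia.
case: (ltnP (4 * x) n) => [lt4|ge4].
  rewrite (@fold_small n (2 * x)); last by lia.
  case: (ltnP (8 * x) n) => [lt8|ge8]; first by lia.
  rewrite (@fold_double_ge n (2 * x)); lia.
rewrite (@fold_double_ge n x); [|lia..].
move=> le3; rewrite fold_double_ge; [|lia..].
move=> ge3; case/negP: not3; apply/dvdnP; exists x; lia.
Qed.

Lemma leader_not_in_window m x :
  m %% 4 = 2 -> 5 * x != 2 ^ m + 1 -> 7 * (2 ^ m + 1) < 40 * x ->
  ~ coset_leader (2 ^ m + 1) x.
Proof.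
set n := 2 ^ m + 1 => m_mod4 not5 lo lead.
have m_eq : m = 4 * (m %/ 4) + 2 by rewrite {1}(divn_eq m 4) m_mod4 mulnC.
have not3 : ~~ (3 %| n).
  rewrite /n m_eq expnD expnM /dvdn -modnDm -modnMm -modnXm;
  by rewrite (_ : 2 ^ 4 %% 3 = 1) // exp1n.
have lt5 := leader_lt_fifth m x ltac:(lia) not3 not5 lead.
set h := fun z => fold n (2 * z).
have le_orbit k : x <= iter k h x.
  by rewrite -{2}(@fold_small n x) -?fold_orbit; [apply: leader_le_fold | lia].
have window j : 5 * iter (4 * j) h x < n.
  elim: j => [|j IHj] //; rewrite mulnS iterD.
  by apply: window_four_steps => //; have := le_orbit (4 * j); lia.
set z := iter (4 * (m %/ 4)) h x.
have orbit_m : iter 2 h z = x.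
  rewrite /z -iterD addnC -m_eq -(@fold_small n x) -?fold_orbit; last by lia.
  by rewrite (_ : 2 ^ m = n.-1) ?fold_mul_pred // /n addn1.
have := le_orbit (4 * (m %/ 4)); have := window (m %/ 4); rewrite -/z => hi_z lo_z.
move: orbit_m; rewrite /= /h fold_double_twice; lia.
Qed.

Theorem lemma4p4 (t x : nat) :
  2 <= t ->
  let m := 4 * t + 2 in
  let n := 2 ^ m + 1 in
  let delta1 := n %/ 5 in
  let delta2 := 2 ^ (4 * t - 1) + (2 ^ (4 * t) - 1) %/ 5 in
  odd x -> delta2 < x -> x <= n - 1 -> x <> delta1 ->
  ~ coset_leader n x.
Proof.
move=> t_ge2 m n delta1 delta2 _ gt_delta2 _ ne_delta1.
have pow4t : 2 ^ (4 * t) = 16 ^ t by rewrite expnM.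
have pow_m : 2 ^ m = 4 * 16 ^ t by rewrite /m expnD pow4t mulnC.
have half_pow4t : 2 ^ (4 * t - 1) * 2 = 16 ^ t by rewrite -expnSr -pow4t; congr (2 ^ _); lia.
have pow16_mod5 : 16 ^ t %% 5 = 1 by rewrite -modnXm exp1n.
apply: leader_not_in_window; first by rewrite /m; lia.
  by apply/eqP; move: ne_delta1; rewrite /delta1 /n pow_m; lia.
by move: gt_delta2; rewrite /delta2 /n pow_m pow4t; lia.
Qed.
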